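(* Let $X$ be a real Banach space with $\operatorname{dens} X = \kappa$. If $D \subseteq X$ is covered by fewer than $\operatorname{cf}(\kappa)$ many hyperplanes of $X$, then $D$ does not contain any overcomplete set for $X$.
   Context: A hyperplane of $X$ is a closed linear subspace of codimension one (the kernel of a non-zero bounded linear functional). $\operatorname{dens}$ denotes the density character and $\operatorname{cf}$ the cofinality. A subset $S$ of a Banach space $X$ with $|S| = \operatorname{dens} X$ is called overcomplete (for $X$) if every subset $\Lambda \subseteq S$ with $|\Lambda| = |S|$ is linearly dense in $X$. *)

From HB Require Import structures.
From mathcomp Require Import all_boot all_order all_algebra.
From mathcomp Require Import all_classical all_reals all_analysis.
Set Implicit Arguments. Unset Strict Implicit. Unset Printing Implicit Defensive.
Import Order.TTheory GRing.Theory Num.Theory.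
Import numFieldNormedType.Exports.
Local Open Scope classical_set_scope.
Local Open Scope ring_scope.
Local Open Scope card_scope.

Section Defs.
Variables (R : realType) (X : completeNormedModType R).

(* S has cardinality dens X = min { |D| : D dense in X } *)
Definition has_dens_card {T : Type} (S : set T) : Prop :=
  (exists D : set X, dense D /\ D #<= S) /\
  (forall D : set X, dense D -> S #<= D).

Definition bounded_linear_functional (f : X -> R) : Prop :=
  (forall (a : R) (x y : X), f (a *: x + y) = a * f x + f y) /\ continuous f.

Definition hyperplane (H : set X) : Prop :=
  exists f : X -> R, bounded_linear_functional f /\ (exists x, f x != 0) /\
    H = f @^-1` [set 0].

Definition lin_span (L : set X) : set X :=
  [set x | exists (n : nat) (v : 'I_n -> X) (a : 'I_n -> R),
      (forall i, L (v i)) /\ x = \sum_(i < n) a i *: v i].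

Definition linearly_dense (L : set X) : Prop := closure (lin_span L) = setT.

Definition overcomplete (S : set X) : Prop :=
  has_dens_card S /\
  forall L : set X, L `<=` S -> L #= S -> linearly_dense L.

End Defs.

(* A strict well-order lt on W such that every proper initial segment has
   cardinality strictly smaller than W: W with lt is (a copy of) the initial
   ordinal of the cardinal |W|. *)
Definition initial_well_order {T : Type} (W : set T) (lt : T -> T -> Prop) : Prop :=
  (forall x, W x -> ~ lt x x) /\
  (forall x y z, W x -> W y -> W z -> lt x y -> lt y z -> lt x z) /\
  (forall x y, W x -> W y -> x = y \/ lt x y \/ lt y x) /\
  (forall A : set T, A `<=` W -> A !=set0 ->
     exists2 m, A m & forall y, A y -> ~ lt y m) /\
  (forall x, W x -> ~ (W #<= [set y | W y /\ lt y x])).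

Definition cofinal {T : Type} (W : set T) (lt : T -> T -> Prop) (C : set T) : Prop :=
  C `<=` W /\ forall x, W x -> exists2 c, C c & ~ lt c x.

(* |I| < cf(W, lt) = min { |C| : C cofinal in W } *)
Definition card_lt_cf (I : Type) {T : Type} (W : set T) (lt : T -> T -> Prop) : Prop :=
  forall C : set T, cofinal W lt C -> (@setT I) #<= C /\ ~ (C #<= @setT I).

(* Fix an injection g of an initial well-order W of size
   kappa = dens X into an overcomplete set S inside the union of the
   hyperplanes H i.  The pieces [W i = g^-1 (H i)] cover W with fewer than
   cf kappa pieces; a piece of size < kappa is, up to cardinality, below some
   proper initial segment, and fewer than cf kappa segments are all below a
   single one, of size < kappa.  If every piece were small, W would thus
   inject into I x (a proper segment), a product of two sets of size < kappa,
   which has size < kappa by Hessenberg's theorem kappa x kappa = kappa.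
   Hence some S `&` H i has size kappa, so it must be linearly dense; but its
   span lies in the closed proper subspace H i. *)

From HB Require Import structures.
From mathcomp Require Import all_boot all_order all_algebra.
From mathcomp Require Import all_classical all_reals all_analysis.
Import numFieldNormedType.Exports.
Local Open Scope classical_set_scope.
Local Open Scope ring_scope.
Local Open Scope card_scope.
Set Implicit Arguments. Unset Strict Implicit. Unset Printing Implicit Defensive.
Import GRing.Theory.

Lemma card_le_fun T U (A : set T) (B : set U) (f : T -> U) :
  (forall x, A x -> B (f x)) ->
  (forall x y, A x -> A y -> f x = f y -> x = y) -> A #<= B.
Proof.
move: B f; elim/Ppointed: U => U B f fAB finj.
  by have -> : A = set0 by apply/seteqP; split=> // x _; case: (no (f x)).
apply/pcard_leP/injfunPex; exists f => // x y /set_mem Ax /set_mem Ay.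
exact: finj.
Qed.

Lemma card_le_rel T U (A : set T) (B : set U) (R : T -> U -> Prop) :
  (forall x, A x -> exists2 y, B y & R x y) ->
  (forall x x' y, A x -> A x' -> R x y -> R x' y -> x = x') -> A #<= B.
Proof.
move=> RAB Rinj; have [[a Aa]|/nonemptyPn->] := pselect (A !=set0); last first.
  exact: card_ge0.
have [b0 _ _] := RAB a Aa.
have /choice[f fP] : forall x, exists y, A x -> B y /\ R x y.
  move=> x; have [/RAB[y By Rxy]|] := pselect (A x); first by exists y.
  by exists b0.
apply: (card_le_fun (f := f)) => [x /fP[]//|x y Ax Ay fxy].
by apply: (Rinj x y (f x) Ax Ay); [case: (fP x Ax)|rewrite fxy; case: (fP y Ay)].
Qed.

Lemma card_le_inj_fun T U (A : set T) (B : set U) (a : T) : A a -> A #<= B ->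
  exists f : T -> U, (forall x, A x -> B (f x)) /\
    (forall x y, A x -> A y -> f x = f y -> x = y).
Proof.
move=> Aa AB; have [[b _]|/nonemptyPn B0] := pselect (B !=set0); last first.
  by move: AB; rewrite B0 => /card_le0P A0; move: Aa; rewrite A0.
move: B b AB; elim/Ppointed: U => U B b; first by case: (no b).
move=> /pcard_leP/injfunPex[f fAB finj]; exists f; split=> // x y Ax Ay.
by apply: finj; exact: mem_set.
Qed.

Lemma card_le_inj_fun_default T U (A : set T) (B : set U) (u0 : U) : A #<= B ->
  exists f : T -> U, (forall x, A x -> B (f x)) /\
    (forall x y, A x -> A y -> f x = f y -> x = y).
Proof.
have [[a Aa]|/nonemptyPn-> _] := pselect (A !=set0); first exact: card_le_inj_fun Aa.
by exists (fun=> u0).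
Qed.

Lemma card_le_setX T U T' U' (A : set T) (B : set U) (A' : set T') (B' : set U') :
  A #<= B -> A' #<= B' -> A `*` A' #<= B `*` B'.
Proof.
have [[a Aa]|/nonemptyPn->] := pselect (A !=set0); last by rewrite set0X.
have [[a' Aa']|/nonemptyPn->] := pselect (A' !=set0); last by rewrite setX0.
move=> /(card_le_inj_fun Aa)[f [fAB finj]] /(card_le_inj_fun Aa')[f' [fAB' finj']].
apply: (card_le_fun (f := fun p => (f p.1, f' p.2))) => [p [/fAB ? /fAB' ?]//|].
move=> [x x'] [y y'] [/= Ax Ax'] [/= Ay Ay'] [/finj-> // /finj'-> //].
Qed.

Section Comparability.
Variables (T U : Type) (A : set T) (B : set U).

Definition partial_bijection (G : set (T * U)) :=
  [/\ G `<=` A `*` B,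
      forall p q, G p -> G q -> p.1 = q.1 -> p.2 = q.2 &
      forall p q, G p -> G q -> p.2 = q.2 -> p.1 = q.1].

Lemma partial_bijection_bigcup (F : set (set (T * U))) :
  F `<=` partial_bijection -> total_on F subset ->
  partial_bijection (\bigcup_(G in F) G).
Proof.
move=> Fbij Ftot; split=> [p [G /Fbij[GAB _ _] /GAB]//| |].
- move=> p q [G1 F1 G1p] [G2 F2 G2q].
  have [G12|G21] := Ftot _ _ F1 F2.
    by have [_ + _] := Fbij _ F2; apply=> //; exact: G12.
  by have [_ + _] := Fbij _ F1; apply=> //; exact: G21.
- move=> p q [G1 F1 G1p] [G2 F2 G2q].
  have [G12|G21] := Ftot _ _ F1 F2.
    by have [_ _] := Fbij _ F2; apply=> //; exact: G12.
  by have [_ _] := Fbij _ F1; apply=> //; exact: G21.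
Qed.

Lemma card_le_total : A #<= B \/ B #<= A.
Proof.
have [G [[GAB Gfun Ginj] Gmax]] := Zorn_bigcup partial_bijection_bigcup.
have [Gdom|] := pselect (forall a, A a -> exists b, G (a, b)).
  left; apply: (card_le_rel (R := fun a b => G (a, b))).
    by move=> a /Gdom[b Gab]; exists b => //; have [] := GAB _ Gab.
  by move=> x x' y _ _ Gx Gx'; exact: (Ginj _ _ Gx Gx').
move=> /existsNP[a /not_implyP[Aa /forallNP nGa]].
have [Gran|] := pselect (forall b, B b -> exists a, G (a, b)).
  right; apply: (card_le_rel (R := fun b a => G (a, b))).
    by move=> b /Gran[a' Gab]; exists a' => //; have [] := GAB _ Gab.
  by move=> x x' y _ _ Gx Gx'; exact: (Gfun _ _ Gx Gx').
move=> /existsNP[b /not_implyP[Bb /forallNP nGb]].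
exfalso; apply: (Gmax (G `|` [set (a, b)])).
  split=> [p Gp|/(_ (a, b) (or_intror erefl))/nGa//]; first by left.
split=> [p [/GAB//|->//]| |].
- move=> [x y] [x' y'] [Gp|[-> ->]] [Gq|[-> ->]] //= e; first exact: (Gfun _ _ Gp Gq).
  + by case: (nGa y); rewrite -e.
  + by case: (nGa y'); rewrite e.
- move=> [x y] [x' y'] [Gp|[-> ->]] [Gq|[-> ->]] //= e; first exact: (Ginj _ _ Gp Gq).
  + by case: (nGb x); rewrite -e.
  + by case: (nGb x'); rewrite e.
Qed.

End Comparability.

Lemma card_le_setU T U (A B : set T) (E : set U) (e0 e1 : U) :
  E e0 -> E e1 -> e0 <> e1 -> E `*` E #<= E ->
  A #<= E -> B #<= E -> A `|` B #<= E.
Proof.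
move=> Ee0 Ee1 e01 EE AE BE.
have [[a Aa]|/nonemptyPn->] := pselect (A !=set0); last by rewrite set0U.
have [[b Bb]|/nonemptyPn->] := pselect (B !=set0); last by rewrite setU0.
have [f [fAE finj]] := card_le_inj_fun Aa AE.
have [g [gBE ginj]] := card_le_inj_fun Bb BE.
apply: card_le_trans EE.
apply: (card_le_fun (f := fun x => if pselect (A x) then (f x, e0) else (g x, e1))).
  by move=> x ABx; case: pselect => [/fAE|nAx]//; case: ABx => // /gBE.
move=> x y xAB yAB; case: pselect => Ax; case: pselect => Ay /pair_equal_spec[fxy exy].
- exact: finj.
- by case: e01.
- by case: e01.
- by case: xAB; case: yAB => // By Bx; exact: ginj.
Qed.

Lemma infinite_two_points T (D : set T) : [set: nat] #<= D ->
  exists d0 d1, [/\ D d0, D d1 & d0 <> d1].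
Proof.
move=> /(card_le_inj_fun (I : [set: nat] 0%N))[io [ioD ioI]].
by exists (io 0%N), (io 1%N); split; [exact: ioD|exact: ioD|move/ioI => /(_ I I)].
Qed.

Lemma card_le_setXU_setD T (D C : set T) (d0 d1 : T) :
  D d0 -> D d1 -> d0 <> d1 -> D `*` D #<= D -> C #<= D ->
  (D `|` C) `*` (D `|` C) `\` D `*` D #<= D.
Proof.
move=> Dd0 Dd1 d01 DD CD.
have CC : C `*` C #<= D by apply: card_le_trans DD; exact: card_le_setX.
have DC : D `*` C #<= D by apply: card_le_trans DD; exact: card_le_setX.
have CD' : C `*` D #<= D by apply: card_le_trans DD; exact: card_le_setX.
apply: (card_le_trans (B := D `*` C `|` (C `*` D `|` C `*` C))).
  apply: subset_card_le => -[x y] [[/= [Dx|Cx] [Dy|Cy]] nDD].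
  - by case: nDD.
  - by left.
  - by right; left.
  - by right; right.
by apply: (card_le_setU Dd0 Dd1 d01) => //; exact: (card_le_setU Dd0 Dd1 d01).
Qed.

Section Hessenberg.
Variables (T : Type) (A : set T).

(* A pairing is the graph of an injection D x D -> D for some D included in A;
   D is read off the diagonal, so that pairings are plain sets of triples and
   chains of pairings can be joined by Zorn_bigcup. *)
Definition pairing_dom (G : set (T * T * T)) : set T :=
  [set t | exists u, G (t, t, u)].

Definition pairing (G : set (T * T * T)) :=
  [/\ G `<=` (pairing_dom G `*` pairing_dom G) `*` pairing_dom G,
      pairing_dom G `*` pairing_dom G `<=` [set p | exists u, G (p, u)],
      forall x y, G x -> G y -> x.1 = y.1 -> x.2 = y.2,
      forall x y, G x -> G y -> x.2 = y.2 -> x.1 = y.1 &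
      pairing_dom G `<=` A].

Definition pairing_graph (D : set T) (phi : T * T -> T) : set (T * T * T) :=
  [set x | (D `*` D) x.1 /\ x.2 = phi x.1].

Lemma pairing_dom_graph D phi : pairing_dom (pairing_graph D phi) = D.
Proof.
by apply/seteqP; split=> [t [_ [[]]]//|t Dt]; exists (phi (t, t)).
Qed.

Lemma pairing_domS G G' : G `<=` G' -> pairing_dom G `<=` pairing_dom G'.
Proof. by move=> GG' t [u Gu]; exists u; exact: GG'. Qed.

Lemma pairing_graphP D phi : D `<=` A ->
  (forall p, (D `*` D) p -> D (phi p)) ->
  (forall p q, (D `*` D) p -> (D `*` D) q -> phi p = phi q -> p = q) ->
  pairing (pairing_graph D phi).
Proof.
move=> DA phiD phiI; rewrite /pairing pairing_dom_graph.
split=> //.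
- by move=> [p u] [/= Dp ->]; split=> //; exact: phiD.
- by move=> p Dp; exists (phi p).
- by move=> [p u] [q v] [/= Dp ->] [/= Dq ->] /= ->.
- by move=> [p u] [q v] [/= Dp ->] [/= Dq ->] /=; exact: phiI.
Qed.

Lemma pairing_fun G : pairing G -> exists phi,
  [/\ G = pairing_graph (pairing_dom G) phi,
      forall p, (pairing_dom G `*` pairing_dom G) p -> pairing_dom G (phi p) &
      forall p q, (pairing_dom G `*` pairing_dom G) p ->
        (pairing_dom G `*` pairing_dom G) q -> phi p = phi q -> p = q].
Proof.
move=> [GD Gtot Gfun Ginj _]; set D := pairing_dom G in GD Gtot *.
have /choice[phi phiG] : forall p, exists u, (D `*` D) p -> G (p, u).
  move=> p; have [/Gtot[u Gu]|nDp] := pselect ((D `*` D) p); first by exists u.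
  by exists p.1 => /nDp.
have GE : G = pairing_graph D phi.
  apply/seteqP; split=> [[p u] Gpu|[p u] [/= Dp ->]]; last exact: phiG.
  by have [Dp _] := GD _ Gpu; split=> //=; exact: (Gfun _ (p, phi p) Gpu (phiG _ Dp)).
exists phi; split=> // [p /phiG/GD[]//|p q Dp Dq phipq].
exact: (Ginj (p, phi p) (q, phi q) (phiG _ Dp) (phiG _ Dq)).
Qed.

Lemma pairing_card_le G : pairing G ->
  pairing_dom G `*` pairing_dom G #<= pairing_dom G.
Proof.
move=> /pairing_fun[phi [_ phiD phiI]].
by apply: (card_le_fun (f := phi)) => // p q Dp Dq; exact: phiI.
Qed.

Lemma pairing_bigcup (F : set (set (T * T * T))) :
  F `<=` pairing -> total_on F subset -> pairing (\bigcup_(G in F) G).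
Proof.
move=> Fpair Ftot.
have domU G : F G -> pairing_dom G `<=` pairing_dom (\bigcup_(G in F) G).
  by move=> FG; apply: pairing_domS; exact: bigcup_sup.
have directed G1 G2 : F G1 -> F G2 -> exists2 G, F G & G1 `<=` G /\ G2 `<=` G.
  move=> F1 F2; have [G12|G21] := Ftot _ _ F1 F2.
  - by exists G2 => //; split.
  - by exists G1 => //; split.
split.
- move=> x [G FG Gx]; have [/(_ _ Gx)[[D1 D2] D3] _ _ _ _] := Fpair _ FG.
  by split; [split|]; exact: domU FG _ _.
- move=> p [[u1 [G1 F1 G1u]] [u2 [G2 F2 G2u]]].
  have [G FG [G1G G2G]] := directed _ _ F1 F2; have [_ Gtot _ _ _] := Fpair _ FG.
  have [|u Gu] := Gtot p; first by split; [exists u1; exact: G1G|exists u2; exact: G2G].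
  by exists u; exists G.
- move=> x y [G1 F1 G1x] [G2 F2 G2y]; have [G FG [G1G G2G]] := directed _ _ F1 F2.
  by have [_ _ + _ _] := Fpair _ FG; apply; [exact: G1G|exact: G2G].
- move=> x y [G1 F1 G1x] [G2 F2 G2y]; have [G FG [G1G G2G]] := directed _ _ F1 F2.
  by have [_ _ _ + _] := Fpair _ FG; apply; [exact: G1G|exact: G2G].
- by move=> t [u [G FG Gu]]; have [_ _ _ _ +] := Fpair _ FG; apply; exists u.
Qed.

Lemma pairing_graph_setU (D C : set T) phi k :
  let E := (D `|` C) `*` (D `|` C) `\` D `*` D in
  D `|` C `<=` A -> (forall c, C c -> ~ D c) ->
  (forall p, (D `*` D) p -> D (phi p)) ->
  (forall p q, (D `*` D) p -> (D `*` D) q -> phi p = phi q -> p = q) ->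
  (forall p, E p -> C (k p)) ->
  (forall p q, E p -> E q -> k p = k q -> p = q) ->
  pairing (pairing_graph (D `|` C)
                         (fun p => if pselect ((D `*` D) p) then phi p else k p)).
Proof.
move=> E DCA CnD phiD phiI kC kI; apply: pairing_graphP => // [p DCp|p q DCp DCq].
  by case: pselect => [Dp|nDp]; [left; exact: phiD|right; exact: kC].
case: pselect => Dp; case: pselect => Dq /=.
- exact: phiI.
- by move=> phipq; case: (CnD (k q)); [exact: kC|rewrite -phipq; exact: phiD].
- by move=> kpq; case: (CnD (k p)); [exact: kC|rewrite kpq; exact: phiD].
- by apply: kI; split.
Qed.

Lemma pairing_extend G : pairing G -> [set: nat] #<= pairing_dom G ->
  ~ (A `\` pairing_dom G #<= pairing_dom G) -> exists2 G', G `<` G' & pairing G'.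
Proof.
move=> Gpair Dinf nAD; have [_ _ _ _ DA] := Gpair.
have [phi [GE phiD phiI]] := pairing_fun Gpair; rewrite GE.
set D := pairing_dom G in Dinf nAD DA phiD phiI *.
have [d0 [d1 [Dd0 Dd1 d01]]] := infinite_two_points Dinf.
have [AD|//] := card_le_total D (A `\` D).
have [e [eAD eI]] := card_le_inj_fun Dd0 AD.
set C := e @` D.
have CnD c : C c -> ~ D c by move=> [d Dd <-]; have [] := eAD d Dd.
have DCA : D `|` C `<=` A by move=> t [/DA//|[d Dd <-]]; have [] := eAD d Dd.
have DC : D #<= C by apply: (card_le_fun (f := e)) => // d Dd; exists d.
have := card_le_trans (card_le_setXU_setD Dd0 Dd1 d01 (pairing_card_le Gpair)
  (card_image_le e D)) DC.
have Ce : C (e d0) by exists d0.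
have Ee : ((D `|` C) `*` (D `|` C) `\` D `*` D) (e d0, e d0).
  by split; [split; right|move=> [/CnD]].
move=> /(card_le_inj_fun Ee)[k [kC kI]].
pose phi' p := if pselect ((D `*` D) p) then phi p else k p.
exists (pairing_graph (D `|` C) phi'); last exact: pairing_graph_setU.
split=> [[p u] [/= Dp ->]|].
  by split=> /=; [case: Dp; split; left|rewrite /phi'; case: pselect].
by move=> /(_ (e d0, e d0, phi' (e d0, e d0)) (conj (proj1 Ee) erefl)) [[/CnD]].
Qed.

Lemma exists_pairing_nat : [set: nat] #<= A ->
  exists2 G, pairing G & [set: nat] #<= pairing_dom G.
Proof.
move=> /(card_le_inj_fun (I : [set: nat] 0%N))[io [ioA ioI]].
set D := io @` setT.
have natD : [set: nat] #<= D by apply: (card_le_fun (f := io)) => // n _; exists n.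
have DD : D `*` D #<= D.
  apply: card_le_trans natD; apply: card_le_trans (card_le_setX
    (card_image_le io setT) (card_image_le io setT)) _.
  by rewrite setXTT; have /card_eqPle[] := card_nat2.
have D0 : (D `*` D) (io 0%N, io 0%N) by split; exists 0%N.
have [phi [phiD phiI]] := card_le_inj_fun D0 DD.
exists (pairing_graph D phi); last by rewrite pairing_dom_graph.
by apply: pairing_graphP => // _ [n _ <-]; exact: ioA.
Qed.

Theorem card_le_setXX : [set: nat] #<= A -> A `*` A #<= A.
Proof.
move=> natA.
(* The alternative [G = set0] lets the empty chain have an upper bound. *)
pose P G := pairing G /\ (G = set0 \/ [set: nat] #<= pairing_dom G).
have Pchain F : F `<=` P -> total_on F subset -> P (\bigcup_(G in F) G).
  move=> FP Ftot; split; first by apply: pairing_bigcup => // G /FP[].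
  have [[x [G FG Gx]]|/nonemptyPn] := pselect (\bigcup_(G in F) G !=set0); last by left.
  have [_ [G0|natG]] := FP _ FG; first by move: Gx; rewrite G0.
  by right; apply: card_le_trans natG (subset_card_le (pairing_domS _)); exact: bigcup_sup.
have [G [[Gpair GN] Gmax]] := Zorn_bigcup Pchain.
have natD : [set: nat] #<= pairing_dom G.
  case: GN => // G0; have [G1 G1pair natG1] := exists_pairing_nat natA.
  case: (Gmax G1); last by split=> //; right.
  rewrite G0; split=> //; rewrite subset0 => G10.
  have dom0 : pairing_dom set0 = set0 by apply/seteqP; split=> // t [].
  by move: natG1; rewrite G10 dom0 => /card_le0P/seteqP[/(_ 0%N I)].
have AD : A `\` pairing_dom G #<= pairing_dom G.
  apply: contrapT => nAD; have [G' GG' G'pair] := pairing_extend Gpair natD nAD.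
  apply: (Gmax G') => //; split=> //; right.
  exact: card_le_trans natD (subset_card_le (pairing_domS (properW GG'))).
have [_ _ _ _ DA] := Gpair; have [d0 [d1 [Dd0 Dd1 d01]]] := infinite_two_points natD.
have := card_le_setU Dd0 Dd1 d01 (pairing_card_le Gpair) (card_lexx _) AD.
rewrite setDUK // => AleD.
apply: card_le_trans (card_le_setX AleD AleD) _.
exact: card_le_trans (pairing_card_le Gpair) (subset_card_le DA).
Qed.

End Hessenberg.

Lemma not_card_le_setXX T U (W : set T) (A : set U) :
  [set: nat] #<= W -> ~ (W #<= A) -> ~ (W #<= A `*` A).
Proof.
move=> natW WA WAA; have [natA|/finite_setPn finA] := pselect ([set: nat] #<= A).
  exact/WA/(card_le_trans WAA)/card_le_setXX.
by have /finite_setPn := card_le_finite WAA (finite_setX finA finA); apply.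
Qed.

Lemma not_card_le_setX T U V (W : set T) (A : set U) (B : set V) :
  [set: nat] #<= W -> ~ (W #<= A) -> ~ (W #<= B) -> ~ (W #<= A `*` B).
Proof.
move=> natW WA WB WAB; have [AB|BA] := card_le_total A B.
- exact/(not_card_le_setXX natW WB)/(card_le_trans WAB)/card_le_setX.
- exact/(not_card_le_setXX natW WA)/(card_le_trans WAB)/card_le_setX.
Qed.

Section InitialOrdinal.
Variables (T : Type) (W : set T) (lt : T -> T -> Prop).
Hypothesis lt_irrefl : forall x, W x -> ~ lt x x.
Hypothesis lt_trans : forall x y z, W x -> W y -> W z -> lt x y -> lt y z -> lt x z.
Hypothesis lt_total : forall x y, W x -> W y -> x = y \/ lt x y \/ lt y x.

Definition segment x := [set y | W y /\ lt y x].

Lemma segment_sub x y : W x -> W y -> lt x y -> segment x `<=` segment y.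
Proof. by move=> Wx Wy xy z [Wz zx]; split=> //; exact: lt_trans xy. Qed.

Lemma no_max_infinite x0 : W x0 -> (forall x, W x -> exists2 y, W y & lt x y) ->
  [set: nat] #<= W.
Proof.
move=> Wx0 nomax.
have /choice[next nextP] : forall x, exists y, W x -> W y /\ lt x y.
  move=> x; have [/nomax[y Wy xy]|nWx] := pselect (W x); first by exists y.
  by exists x.
pose s := fix s n := if n is n'.+1 then next (s n') else x0.
have sW n : W (s n) by elim: n => //= n /nextP[].
have s_lt m k : lt (s m) (s (k.+1 + m)%N).
  elim: k => [|k IH]; first by have [] := nextP _ (sW m).
  by apply: lt_trans IH _ => //; have [] := nextP _ (sW (k.+1 + m)).
apply: (card_le_fun (f := s)) => // m n _ _ smn.
have [lt_mn|lt_nm|//] := ltngtP m n.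
- by have := s_lt m (n - m.+1)%N; rewrite addSnnS subnK // smn => /(lt_irrefl (sW n)).
- by have := s_lt n (m - n.+1)%N; rewrite addSnnS subnK // smn => /(lt_irrefl (sW n)).
Qed.

Lemma small_card_le_segment (A : set T) : [set: nat] #<= W ->
  (forall x, W x -> exists2 y, W y & lt x y) ->
  A `<=` W -> ~ (W #<= A) -> exists2 x, W x & A #<= segment x.
Proof.
move=> natW nomax AW nWA; apply: contrapT => nAseg.
have segA x : W x -> segment x #<= A.
  by move=> Wx; have [Aseg|//] := card_le_total A (segment x); case: nAseg; exists x.
have [[w Ww wA]|unbdd] := pselect (exists2 w, W w & forall a, A a -> ~ lt w a).
  have [w' Ww' ww'] := nomax w Ww; apply: nAseg; exists w' => //.
  apply: subset_card_le => a Aa; split; first exact: AW.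
  have [->//|[aw|wa]] := lt_total (AW _ Aa) Ww; last by case: (wA a Aa).
  exact: (lt_trans (AW _ Aa) Ww Ww' aw ww').
have /choice[up upP] : forall w, exists a, W w -> A a /\ lt w a.
  move=> w; have [Ww|nWw] := pselect (W w); last by exists w.
  apply: contrapT => /forallNP nup; apply: unbdd; exists w => // a Aa wa.
  by apply: (nup a).
have /choice[g gP] : forall a, exists g : T -> T, A a ->
    (forall x, segment a x -> A (g x)) /\
    (forall x y, segment a x -> segment a y -> g x = g y -> x = y).
  move=> a; have [Aa|nAa] := pselect (A a); last by exists id => /nAa.
  by have [g gP] := card_le_inj_fun_default a (segA a (AW _ Aa)); exists g.
apply: (not_card_le_setXX natW nWA).
apply: (card_le_fun (f := fun w => (up w, g (up w) w))).
  move=> w Ww; have [Aa wa] := upP w Ww; split=> //=.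
  by have [+ _] := gP _ Aa; apply.
move=> v w Wv Ww [/= upvw gvw]; have [_ va] := upP v Wv; have [Aw wa] := upP w Ww.
rewrite upvw in va gvw; have [_ ginj] := gP _ Aw.
exact: (ginj v w (conj Wv va) (conj Ww wa) gvw).
Qed.

Variable I : Type.
Hypothesis lt_cf : forall C, cofinal W lt C -> ~ (C #<= [set: I]).

Lemma bounded_family (x : I -> T) : (forall i, W (x i)) ->
  exists2 w, W w & forall i, lt (x i) w.
Proof.
move=> Wx; apply: contrapT => nbd; apply: (lt_cf (C := range x)); last first.
  exact: card_image_le.
split=> [_ [i _ <-]//|w Ww]; apply: contrapT => nC; apply: nbd; exists w => // i.
by apply: contrapT => nxw; apply: nC; exists (x i) => //; exists i.
Qed.

Hypothesis initial : forall x, W x -> ~ (W #<= segment x).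

Lemma cover_card_le_piece (A : I -> set T) : (forall w, W w -> exists i, A i w) ->
  exists i, W #<= A i.
Proof.
move=> cover; apply: contrapT => /forallNP small.
have [[w0 Ww0]|/nonemptyPn W0] := pselect (W !=set0); last first.
  by apply: (lt_cf (C := set0)) => //; split=> // w; rewrite W0.
have [i0 _] := cover _ Ww0.
have nomax x : W x -> exists2 y, W y & lt x y.
  by move=> Wx; have [y Wy /(_ i0)] := bounded_family (x := fun=> x) (fun=> Wx); exists y.
have natW := no_max_infinite Ww0 nomax.
have /choice[x xP] : forall i, exists x, W x /\ W `&` A i #<= segment x.
  move=> i; have [x Wx Ax] : exists2 x, W x & W `&` A i #<= segment x.
    apply: small_card_le_segment => // WA; apply: (small i).
    exact: card_le_trans WA (subset_card_le (@subIsetr _ _ _)).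
  by exists x.
have [w Ww xw] := bounded_family (fun i => (xP i).1).
have /choice[h hP] : forall i, exists h : T -> T,
    (forall v, (W `&` A i) v -> segment w (h v)) /\
    (forall v v', (W `&` A i) v -> (W `&` A i) v' -> h v = h v' -> v = v').
  move=> i; have [Wx Ax] := xP i; apply: (card_le_inj_fun_default w0).
  exact: card_le_trans Ax (subset_card_le (segment_sub Wx Ww (xw i))).
have /choice[iv ivP] : forall v, exists i, W v -> A i v.
  move=> v; have [/cover[i Ai]|nWv] := pselect (W v); first by exists i.
  by exists i0 => /nWv.
apply: (not_card_le_setX natW _ (initial Ww)).
  by apply: lt_cf; split=> // v Wv; exists v => //; exact: lt_irrefl.
apply: (card_le_fun (f := fun v => (iv v, h (iv v) v))).
  by move=> v Wv; split=> //=; have [+ _] := hP (iv v); apply; split=> //; exact: ivP.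
move=> v v' Wv Wv' [/= ivv' hvv']; rewrite ivv' in hvv'; have [_ +] := hP (iv v').
by apply=> //; split=> //; [rewrite -ivv'|]; exact: ivP.
Qed.

End InitialOrdinal.

Section Hyperplanes.
Variables (R : realType) (X : completeNormedModType R).

Lemma lin_span_sub_kernel (f : X -> R) (L : set X) :
  (forall (a : R) (x y : X), f (a *: x + y) = a * f x + f y) ->
  L `<=` f @^-1` [set 0] -> lin_span L `<=` f @^-1` [set 0].
Proof.
move=> flin Lker _ [n [v [a [vL ->]]]].
have f0 : f 0 = 0 by have := flin (-1) 0 0; rewrite scaler0 addr0 mulN1r addNr.
apply: (big_ind (fun y => f y = 0)) => // [y z fy fz|i _].
  by have := flin 1 y z; rewrite scale1r mul1r fy fz addr0.
by have := flin (a i) (v i) 0; rewrite addr0 (Lker _ (vL i)) f0 mulr0 addr0.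
Qed.

Lemma hyperplane_not_linearly_dense (H L : set X) :
  hyperplane H -> L `<=` H -> ~ linearly_dense L.
Proof.
move=> [f [[flin fcont] [[x fx0] ->]]] LH Ldense.
have kclosed : closed (f @^-1` [set 0]).
  by apply: preimage_closed; [move=> y _; exact: fcont|exact: closed_eq].
have : (f @^-1` [set 0]) x.
  rewrite ((closure_id _).1 kclosed); apply: (closureS (lin_span_sub_kernel flin LH)).
  by rewrite Ldense.
by move=> /= fx; rewrite fx eqxx in fx0.
Qed.

End Hyperplanes.

Theorem proposition3p10 (R : realType) (X : completeNormedModType R)
  (T : Type) (W : set T) (lt : T -> T -> Prop)
  (I : Type) (H : I -> set X) (D : set X) :
  initial_well_order W lt ->
  has_dens_card X W ->
  card_lt_cf I W lt ->
  (forall i, hyperplane (H i)) ->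
  D `<=` \bigcup_(i in setT) H i ->
  ~ (exists S : set X, S `<=` D /\ overcomplete S).
Proof.
move=> [lt_irrefl [lt_trans [lt_total [_ initial]]]] [[D1 [D1dense D1W]] Wmin].
move=> lt_cf hyperH DH [S [SD [[[D0 [D0dense D0S]] Smin] Sover]]].
have [g [gS ginj]] := card_le_inj_fun_default 0 (card_le_trans (Wmin _ D0dense) D0S).
have [i WA] : exists i, W #<= [set w | W w /\ H i (g w)].
  apply: (cover_card_le_piece lt_irrefl lt_trans lt_total
    (fun C hC => (lt_cf C hC).2) initial).
  by move=> w Ww; have [i _ Hi] := DH _ (SD _ (gS _ Ww)); exists i.
have SH : S `&` H i #= S.
  apply: Cantor_Bernstein; first exact: subset_card_le (@subIsetl _ _ _).
  apply: card_le_trans (Smin _ D1dense) _; apply: card_le_trans D1W _.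
  apply: card_le_trans WA _; apply: (card_le_fun (f := g)) => [w [Ww Hw]|v w [Wv _] [Ww _]].
    by split=> //; exact: gS.
  exact: ginj.
apply: hyperplane_not_linearly_dense (hyperH i) (@subIsetr _ _ _) _.
exact: Sover _ (@subIsetl _ _ _) SH.
Qed.
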